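(* For every real $R<10/7$ there is no $R$-competitive F-system.
   Context: F-system: a family $\mathcal F=\{F^c_{t,k}\}$ of sets of positive integers, indexed by $c\in\{A,B\}$ and integers $0<k\le t$, such that (F1) $|F^c_{t,k}|\ge k$ for all $c,t,k$; and (F2) $F^A_{t,k}\cap F^B_{t',k'}=\emptyset$ for all $k\le t$, $k'\le t'$ with $k+k'\le\max(t,t')$. An F-system is $R$-competitive if there is a constant $\lambda$ (independent of $t$) such that for every positive integer $t$, $\left|\bigcup_{c\in\{A,B\}}\bigcup_{0<\kappa\le\tau\le t}F^c_{\tau,\kappa}\right|\le Rt+\lambda$. *)

From Stdlib Require Import Reals Lra Lia Arith List.
Import ListNotations.
Open Scope R_scope.

Inductive color := cA | cB.

(* A Ffamily F^c_{t,k} of sets of positive integers, as predicates on nat.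
   Only indices with 0 < k <= t are meaningful. *)
Definition Ffamily := color -> nat -> nat -> nat -> Prop.

Definition card_ge (S : nat -> Prop) (k : nat) : Prop :=
  exists l : list nat, NoDup l /\ length l = k /\ Forall S l.

Definition card_leR (S : nat -> Prop) (x : R) : Prop :=
  forall l : list nat, NoDup l -> Forall S l -> INR (length l) <= x.

Definition F_system (F : Ffamily) : Prop :=
  (forall c t k x, (0 < k <= t)%nat -> F c t k x -> (0 < x)%nat) /\
  (forall c t k, (0 < k <= t)%nat -> card_ge (F c t k) k) /\
  (forall t k t' k', (0 < k <= t)%nat -> (0 < k' <= t')%nat ->
     (k + k' <= Nat.max t t')%nat ->
     forall x, F cA t k x -> F cB t' k' x -> False).

Definition union_upto (F : Ffamily) (t : nat) : nat -> Prop :=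
  fun x => exists c tau kappa, (0 < kappa <= tau)%nat /\ (tau <= t)%nat /\ F c tau kappa x.

Definition competitive (Rc : R) (F : Ffamily) : Prop :=
  exists lam : R, forall t : nat, (0 < t)%nat ->
    card_leR (union_upto F t) (Rc * INR t + lam).

From Stdlib Require Import Reals Lra Lia Arith List Classical ClassicalEpsilon Wf_nat.
Import ListNotations.
Open Scope R_scope.

(* Fix m and K and give the set F^c_{6s,cs}, for c in {3,4,6} and m <= s < m + K, the
   weight (1/s - 1/(s+1)) times 2/7, 3/7 or 2/7 according to c.  Counted with multiplicity, the
   weighted size of these sets is (60/7) * sum_s 1/(s+1), which grows like log K.  Charge every
   element the total weight of the sets containing it.  If the element first appears at level f,
   condition (F2) makes its memberships in the two colors nearly complementary, and the dual of a
   small linear program (which is where 2/7, 3/7, 2/7 come from) bounds its charge by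
   (1 + 4/(7m)) / f.  Since 1/f = sum_{s >= f} (1/s - 1/(s+1)) + tail, the charges add up to at most
   sum_s (1/s - 1/(s+1)) |union up to 6s| + O(1) <= 6 R sum_s 1/(s+1) + O(1) by competitiveness.
   Letting K and then m tend to infinity gives 60/7 <= 6 R, i.e. R >= 10/7. *)

Fixpoint sumR {A : Type} (f : A -> R) (l : list A) : R :=
  match l with nil => 0 | x :: l' => f x + sumR f l' end.

Section Sums.
Context {A : Type}.
Implicit Types (f g : A -> R) (l : list A).

Lemma sumR_app f l1 l2 : sumR f (l1 ++ l2) = sumR f l1 + sumR f l2.
Proof. induction l1; simpl; lra. Qed.

Lemma sumR_ext f g l : (forall x, In x l -> f x = g x) -> sumR f l = sumR g l.
Proof. induction l as [|a l IH]; simpl; intros H; auto. rewrite H, IH; auto. Qed.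

Lemma sumR_le f g l : (forall x, In x l -> f x <= g x) -> sumR f l <= sumR g l.
Proof.
  induction l as [|a l IH]; simpl; intros H; [lra|].
  pose proof (H a (or_introl eq_refl)). pose proof (IH (fun x h => H x (or_intror h))). lra.
Qed.

Lemma sumR_add f g l : sumR (fun x => f x + g x) l = sumR f l + sumR g l.
Proof. induction l; simpl; lra. Qed.

Lemma sumR_scal (c : R) f l : sumR (fun x => c * f x) l = c * sumR f l.
Proof. induction l as [|a l IH]; simpl; [|rewrite IH]; lra. Qed.

Lemma sumR_const (c : R) l : sumR (fun _ => c) l = c * INR (length l).
Proof. induction l as [|a l IH]; simpl; [lra|]. rewrite IH. destruct (length l); simpl; lra. Qed.

End Sums.

Lemma sumR_swap {A B : Type} (f : A -> B -> R) (la : list A) (lb : list B) :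
  sumR (fun a => sumR (fun b => f a b) lb) la = sumR (fun b => sumR (fun a => f a b) la) lb.
Proof.
  induction la as [|a la IH]; simpl.
  - induction lb; simpl; lra.
  - rewrite IH, <- sumR_add. reflexivity.
Qed.

Definition memb (l : list nat) (x : nat) : bool := if in_dec Nat.eq_dec x l then true else false.
Definition indl (x : nat) (l : list nat) : R := if memb l x then 1 else 0.

Lemma memb_spec l x : memb l x = true <-> In x l.
Proof. unfold memb. destruct in_dec; split; congruence || tauto. Qed.

Lemma indl_bounds x l : 0 <= indl x l <= 1.
Proof. unfold indl. destruct memb; lra. Qed.

Lemma sumR_indl (U l : list nat) : sumR (fun x => indl x l) U = INR (length (filter (memb l) U)).
Proof.
  induction U as [|a U IH]; simpl; [reflexivity|]. unfold indl at 1.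
  destruct (memb l a); rewrite IH; [cbn [length]; rewrite S_INR|]; lra.
Qed.

Lemma sumR_indl_incl (U l : list nat) : NoDup U -> NoDup l -> incl l U ->
  sumR (fun x => indl x l) U = INR (length l).
Proof.
  intros HU Hl HlU. rewrite sumR_indl. f_equal. apply Nat.le_antisymm.
  - apply NoDup_incl_length; [now apply NoDup_filter|].
    intros x Hx. apply filter_In in Hx. now apply memb_spec.
  - apply NoDup_incl_length; auto. intros x Hx. apply filter_In. split; auto. now apply memb_spec.
Qed.

Lemma nat_least (P : nat -> Prop) : (exists n, P n) -> exists n, P n /\ forall k, P k -> (n <= k)%nat.
Proof.
  intros Hex. destruct (dec_inh_nat_subset_has_unique_least_element P (fun n => classic (P n)) Hex)
    as [n [[Pn Hn] _]]. eauto.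
Qed.

Lemma nat_greatest (P : nat -> Prop) (B : nat) : (exists n, P n) -> (forall n, P n -> (n <= B)%nat) ->
  exists n, P n /\ forall k, P k -> (k <= n)%nat.
Proof.
  intros [n Pn] HB.
  destruct (nat_least (fun j => P (B - j)%nat /\ (j <= B)%nat)) as [j [[Pj Hj] Hmin]].
  { exists (B - n)%nat. specialize (HB n Pn). replace (B - (B - n))%nat with n by lia. split; [exact Pn|lia]. }
  exists (B - j)%nat. split; auto. intros k Pk. specialize (HB k Pk).
  assert (j <= B - k)%nat by (apply Hmin; replace (B - (B - k))%nat with k by lia; split; [exact Pk|lia]).
  lia.
Qed.

Definition weight (s : nat) : R := / INR s - / INR (S s).

Lemma Rinv_INR_le (a b : nat) : (0 < b)%nat -> (b <= a)%nat -> / INR a <= / INR b.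
Proof. intros. apply Rinv_le_contravar; [apply lt_0_INR|apply le_INR]; lia. Qed.

Lemma Rinv_INR_pos (a : nat) : (0 < a)%nat -> 0 < / INR a.
Proof. intros. apply Rinv_0_lt_compat, lt_0_INR. lia. Qed.

Lemma weight_nonneg s : (1 <= s)%nat -> 0 <= weight s.
Proof. intros. unfold weight. pose proof (Rinv_INR_le (S s) s ltac:(lia) ltac:(lia)). lra. Qed.

Lemma weight_mul s : (1 <= s)%nat -> weight s * INR s = / INR (S s).
Proof. intros. unfold weight. rewrite S_INR. assert (0 < INR s) by (apply lt_0_INR; lia). field. lra. Qed.

Lemma sum_weight_from K m f : (1 <= m)%nat -> (f <= m + K)%nat ->
  sumR (fun s => weight s * (if (f <=? s)%nat then 1 else 0)) (seq m K) = / INR (Nat.max m f) - / INR (m + K).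
Proof.
  revert m. induction K as [|K IH]; intros m Hm Hf; cbn [seq sumR].
  - rewrite Nat.add_0_r, Nat.max_l by lia. lra.
  - rewrite IH by lia. replace (S m + K)%nat with (m + S K)%nat by lia. unfold weight.
    destruct (Nat.leb_spec f m).
    + rewrite !Nat.max_l by lia. lra.
    + rewrite !Nat.max_r by lia. lra.
Qed.

Lemma sum_weight_window K m L H : (1 <= m)%nat -> (1 <= L)%nat ->
  sumR (fun s => weight s * (if andb (L <=? s)%nat (s <=? H)%nat then 1 else 0)) (seq m K)
  <= Rmax 0 (/ INR (Nat.max m L) - / INR (S H)).
Proof.
  revert m. induction K as [|K IH]; intros m Hm HL; cbn [seq sumR]; [apply Rmax_l|].
  specialize (IH (S m) ltac:(lia) HL). unfold weight in IH |- *.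
  destruct (Nat.leb_spec L m); destruct (Nat.leb_spec m H); cbn [andb].
  - rewrite (Nat.max_l (S m) L) in IH by lia. rewrite (Nat.max_l m L) by lia.
    pose proof (Rinv_INR_le (S H) (S m) ltac:(lia) ltac:(lia)).
    pose proof (Rinv_INR_le (S m) m ltac:(lia) ltac:(lia)).
    pose proof (Rinv_INR_le (S H) m ltac:(lia) ltac:(lia)).
    rewrite Rmax_right in IH by lra. rewrite Rmax_right by lra. lra.
  - rewrite (Nat.max_l (S m) L) in IH by lia.
    pose proof (Rinv_INR_le (S m) (S H) ltac:(lia) ltac:(lia)).
    rewrite Rmax_left in IH by lra.
    pose proof (Rmax_l 0 (/ INR (Nat.max m L) - / INR (S H))). lra.
  - rewrite (Nat.max_r (S m) L) in IH by lia. rewrite Nat.max_r by lia. lra.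
  - rewrite (Nat.max_r (S m) L) in IH by lia. rewrite Nat.max_r by lia. lra.
Qed.

Lemma sum_weight_supported K m L H (g : nat -> R) : (1 <= m <= L)%nat ->
  (forall s, 0 <= g s <= 1) -> (forall s, In s (seq m K) -> g s <> 0 -> (L <= s <= H)%nat) ->
  sumR (fun s => weight s * g s) (seq m K) <= Rmax 0 (/ INR L - / INR (S H)).
Proof.
  intros HmL Hg Hsupp. replace L with (Nat.max m L) at 1 by lia.
  eapply Rle_trans; [|apply sum_weight_window; lia].
  apply sumR_le. intros s Hs. pose proof (weight_nonneg s ltac:(apply in_seq in Hs; lia)).
  destruct (Req_dec (g s) 0) as [->|Hnz]; [destruct andb; lra|].
  destruct (Hsupp s Hs Hnz). rewrite (proj2 (Nat.leb_le L s)), (proj2 (Nat.leb_le s H)) by lia.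
  specialize (Hg s). simpl. nra.
Qed.

Definition harm (m K : nat) : R := sumR (fun s => / INR (S s)) (seq m K).

Lemma harm_block n : (1 <= n)%nat -> 1 / 2 <= harm n n.
Proof.
  intros Hn. unfold harm.
  assert (H : sumR (fun _ => / INR (2 * n)) (seq n n) <= sumR (fun s => / INR (S s)) (seq n n)).
  { apply sumR_le. intros s Hs. apply in_seq in Hs. apply Rinv_INR_le; lia. }
  rewrite sumR_const, length_seq, mult_INR in H. replace (INR 2) with 2 in H by reflexivity.
  assert (0 < INR n) by (apply lt_0_INR; lia).
  replace (/ (2 * INR n) * INR n) with (1 / 2) in H by (field; lra). exact H.
Qed.

Lemma harm_unbounded m J : (1 <= m)%nat -> exists K, INR J <= harm m K.
Proof.
  intros Hm. enough (Half : forall j, exists K, INR j / 2 <= harm m K).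
  { destruct (Half (2 * J)%nat) as [K HK]. exists K. rewrite mult_INR in HK. simpl in HK. lra. }
  intros j; induction j as [|j IH]; [exists 0%nat; unfold harm; simpl; lra|].
  destruct IH as [K HK]. exists (K + (m + K))%nat. pose proof (harm_block (m + K) ltac:(lia)).
  unfold harm in *. rewrite seq_app, sumR_app, S_INR. lra.
Qed.

Lemma sum_weight_bounds m K : (1 <= m)%nat -> 0 <= sumR weight (seq m K) <= 1.
Proof.
  intros Hm.
  rewrite (sumR_ext _ (fun s => weight s * (if (m <=? s)%nat then 1 else 0))).
  - rewrite sum_weight_from, Nat.max_id by lia.
    pose proof (Rinv_INR_le (m + K) m ltac:(lia) ltac:(lia)).
    pose proof (Rinv_INR_le m 1 ltac:(lia) ltac:(lia)). pose proof (Rinv_INR_pos (m + K) ltac:(lia)).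
    simpl in *. rewrite Rinv_1 in *. lra.
  - intros s Hs. apply in_seq in Hs. rewrite (proj2 (Nat.leb_le m s)) by lia. ring.
Qed.

Definition levels : list nat := [3; 4; 6]%nat.

Lemma levels_cases c : In c levels -> (c = 3 \/ c = 4 \/ c = 6)%nat.
Proof. simpl. intuition. Qed.

(* Bound on the weight an element collects at level [c] of one color when its potential is [F] and
   [X], [Y] are the inverses of the least cardinalities it reaches in that color and in the other one;
   the quadratic term absorbs the integer rounding in the (F2) constraint [(6 - c) s < c' s']. *)
Definition level_share (c : nat) (F X Y : R) : R :=
  Rmax 0 (Rmin F (INR c * X) - INR (6 - c) * Y + INR ((6 - c) * (5 - c)) * (Y * Y)).

Lemma charge_ineq_linear (F X Y : R) : 0 <= X <= F / 3 -> 0 <= Y <= F / 3 ->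
  2/7 * (Rmax 0 (3 * X - 3 * Y) + Rmax 0 (3 * Y - 3 * X))
  + 3/7 * (Rmax 0 (Rmin F (4 * X) - 2 * Y) + Rmax 0 (Rmin F (4 * Y) - 2 * X))
  + 2/7 * (Rmax 0 (Rmin F (6 * X)) + Rmax 0 (Rmin F (6 * Y))) <= F.
Proof.
  intros. unfold Rmin, Rmax.
  repeat match goal with |- context [Rle_dec ?a ?b] => destruct (Rle_dec a b) end; lra.
Qed.

Lemma Rmult_le_Rabs (a u : R) : 0 <= u <= 1 -> a * u <= Rabs a.
Proof. intros. destruct (Rcase_abs a); [rewrite Rabs_left|rewrite Rabs_right]; nra. Qed.

Lemma Rmax_0_add_le u e : 0 <= e -> Rmax 0 (u + e) <= Rmax 0 u + e.
Proof. intros. unfold Rmax. repeat destruct Rle_dec; lra. Qed.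

Lemma charge_ineq (F X Y : R) : 0 <= X <= F / 3 -> 0 <= Y <= F / 3 ->
  2/7 * (level_share 3 F X Y + level_share 3 F Y X) + 3/7 * (level_share 4 F X Y + level_share 4 F Y X)
  + 2/7 * (level_share 6 F X Y + level_share 6 F Y X) <= F + 4/7 * (F * F).
Proof.
  intros HX HY. pose proof (charge_ineq_linear F X Y HX HY).
  unfold level_share. cbn [Nat.sub Nat.mul Nat.add].
  replace (INR 0) with 0 by reflexivity. replace (INR 2) with 2 by reflexivity.
  replace (INR 3) with 3 by (simpl; ring). replace (INR 4) with 4 by (simpl; ring).
  replace (INR 6) with 6 by (simpl; ring).
  rewrite (Rmin_right F (3 * X)), (Rmin_right F (3 * Y)) by lra.
  pose proof (Rmax_0_add_le (3 * X - 3 * Y) (6 * (Y * Y)) ltac:(nra)).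
  pose proof (Rmax_0_add_le (3 * Y - 3 * X) (6 * (X * X)) ltac:(nra)).
  pose proof (Rmax_0_add_le (Rmin F (4 * X) - 2 * Y) (2 * (Y * Y)) ltac:(nra)).
  pose proof (Rmax_0_add_le (Rmin F (4 * Y) - 2 * X) (2 * (X * X)) ltac:(nra)).
  assert (X * X <= F * F / 9) by nra. assert (Y * Y <= F * F / 9) by nra.
  replace (Rmin F (6 * X) - 0 * Y + 0 * (Y * Y)) with (Rmin F (6 * X)) by ring.
  replace (Rmin F (6 * Y) - 0 * X + 0 * (X * X)) with (Rmin F (6 * Y)) by ring.
  lra.
Qed.

Lemma Rdiv_le_inv (k p q : R) : 0 < p -> 0 < q -> k * p <= q -> k / q <= / p.
Proof.
  intros Hp Hq H. apply (Rmult_le_reg_l (p * q)); [nra|].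
  replace (p * q * (k / q)) with (k * p) by (field; lra).
  replace (p * q * / p) with q by (field; lra). exact H.
Qed.

Lemma Rinv_le_div (k p q : R) : 0 < p -> 0 < q -> q <= k * p -> / p <= k / q.
Proof.
  intros Hp Hq H. apply (Rmult_le_reg_l (p * q)); [nra|].
  replace (p * q * (k / q)) with (k * p) by (field; lra).
  replace (p * q * / p) with q by (field; lra). exact H.
Qed.

Lemma Rinv_sub_le (b d : R) : 1 <= b -> 0 <= d -> / b - d * (/ b * / b) <= / (b + d).
Proof.
  intros Hb Hd. replace (/ b - d * (/ b * / b)) with ((b - d) / (b * b)) by (field; lra).
  apply Rdiv_le_inv; nra.
Qed.

Lemma level_share_ge (c f L H a : nat) (Y : R) :
  (1 <= f <= L)%nat -> (1 <= a <= c * L)%nat -> 0 <= Y ->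
  INR (6 - c) * Y - INR ((6 - c) * (5 - c)) * (Y * Y) <= / INR (S H) ->
  Rmax 0 (/ INR L - / INR (S H)) <= level_share c (/ INR f) (/ INR a) Y.
Proof.
  intros Hf Ha HY HH.
  assert (/ INR L <= / INR f) by (apply Rinv_INR_le; lia).
  assert (/ INR L <= INR c * / INR a).
  { apply Rinv_le_div; [apply lt_0_INR; lia|apply lt_0_INR; lia|].
    rewrite <- mult_INR. apply le_INR. lia. }
  unfold level_share. apply Rle_max_compat_l. unfold Rmin. destruct Rle_dec; lra.
Qed.

Lemma cross_term_le (c H b : nat) : In c levels -> (1 <= b)%nat -> ((6 - c) * H + 1 <= b)%nat ->
  INR (6 - c) * / INR b - INR ((6 - c) * (5 - c)) * (/ INR b * / INR b) <= / INR (S H).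
Proof.
  intros Hc Hb HH.
  assert (Hb1 : 1 <= INR b) by (apply (le_INR 1); lia).
  assert (HS : 0 < INR (S H)) by (apply lt_0_INR; lia).
  pose proof (Rinv_0_lt_compat _ HS).
  destruct (levels_cases c Hc) as [-> | [-> | ->]]; cbn [Nat.sub] in HH; cbn [Nat.sub Nat.mul Nat.add].
  - pose proof (Rinv_sub_le (INR b) 2 Hb1 ltac:(lra)).
    assert (3 / (INR b + 2) <= / INR (S H)).
    { apply Rdiv_le_inv; [lra|lra|]. apply le_INR in HH. rewrite S_INR. rewrite plus_INR, mult_INR in HH.
      simpl in HH. lra. }
    replace (INR 3) with 3 by (simpl; ring). replace (INR 6) with 6 by (simpl; ring). unfold Rdiv in *. lra.
  - pose proof (Rinv_sub_le (INR b) 1 Hb1 ltac:(lra)).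
    assert (2 / (INR b + 1) <= / INR (S H)).
    { apply Rdiv_le_inv; [lra|lra|]. apply le_INR in HH. rewrite S_INR. rewrite plus_INR, mult_INR in HH.
      simpl in HH. lra. }
    replace (INR 2) with 2 by reflexivity. unfold Rdiv in *. lra.
  - replace (INR 0) with 0 by reflexivity. lra.
Qed.

Definition opp (col : color) : color := match col with cA => cB | cB => cA end.
Definition colors : list color := [cA; cB].
Definition level_weight (c : nat) : R := if Nat.eqb c 4 then 3/7 else 2/7.

Section Charging.

Variable F : Ffamily.
Variable L : color -> nat -> nat -> list nat.
Hypothesis L_spec : forall col t k, (0 < k <= t)%nat ->
  NoDup (L col t k) /\ length (L col t k) = k /\ Forall (F col t k) (L col t k).
Hypothesis F2 : forall t k t' k', (0 < k <= t)%nat -> (0 < k' <= t')%nat ->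
  (k + k' <= Nat.max t t')%nat -> forall x, F cA t k x -> F cB t' k' x -> False.
Variables m K : nat.
Hypothesis m_pos : (1 <= m)%nat.

Definition block (col : color) (s c : nat) : list nat := L col (6 * s)%nat (c * s)%nat.

Lemma block_spec col s c : (1 <= s)%nat -> In c levels ->
  NoDup (block col s c) /\ length (block col s c) = (c * s)%nat /\
  Forall (F col (6 * s)%nat (c * s)%nat) (block col s c).
Proof. intros Hs Hc. apply L_spec. destruct (levels_cases c Hc) as [-> | [-> | ->]]; lia. Qed.

Lemma block_in_union col s c t x : (1 <= s)%nat -> In c levels -> (6 * s <= t)%nat ->
  In x (block col s c) -> union_upto F t x.
Proof.
  intros Hs Hc Ht Hx. destruct (block_spec col s c Hs Hc) as [_ [_ HF]].
  exists col, (6 * s)%nat, (c * s)%nat. split; [destruct (levels_cases c Hc) as [-> | [-> | ->]]; lia|].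
  split; [exact Ht|]. exact (proj1 (Forall_forall _ _) HF x Hx).
Qed.

Definition occurs (col : color) (s c x : nat) : Prop :=
  (m <= s < m + K)%nat /\ In c levels /\ In x (block col s c).

Definition share (col : color) (c x : nat) : R :=
  sumR (fun s => weight s * indl x (block col s c)) (seq m K).

Definition charge (x : nat) : R :=
  sumR (fun col => sumR (fun c => level_weight c * share col c x) levels) colors.

Definition seen (s : nat) : list nat :=
  flat_map (fun s' => flat_map (fun col => flat_map (block col s') levels) colors) (seq m (S s - m)).

Definition potential (x : nat) : R :=
  sumR (fun s => weight s * indl x (seen s)) (seq m K) + / INR (m + K).

Lemma in_seen s x : In x (seen s) <->
  exists s' col c, (m <= s' <= s)%nat /\ In c levels /\ In x (block col s' c).
Proof.
  unfold seen. rewrite in_flat_map. split.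
  - intros [s' [Hs Hx]]. apply in_seq in Hs. apply in_flat_map in Hx as [col [_ Hx]].
    apply in_flat_map in Hx as [c [Hc Hx]]. exists s', col, c. repeat split; auto; lia.
  - intros [s' [col [c [Hs [Hc Hx]]]]]. exists s'. split; [apply in_seq; lia|].
    apply in_flat_map. exists col. split; [destruct col; simpl; auto|].
    apply in_flat_map. eauto.
Qed.

Section Element.

Variable x : nat.

Lemma occurs_cross col s c s' c' : occurs col s c x -> occurs (opp col) s' c' x ->
  (6 * s < c * s + c' * s')%nat.
Proof.
  intros [Hs [Hc Hx]] [Hs' [Hc' Hx']].
  destruct (block_spec col s c ltac:(lia) Hc) as [_ [_ HF]].
  destruct (block_spec (opp col) s' c' ltac:(lia) Hc') as [_ [_ HF']].
  rewrite Forall_forall in HF, HF'. specialize (HF x Hx). specialize (HF' x Hx').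
  assert (Hk : (0 < c * s <= 6 * s)%nat) by (destruct (levels_cases c Hc) as [-> | [-> | ->]]; lia).
  assert (Hk' : (0 < c' * s' <= 6 * s')%nat) by (destruct (levels_cases c' Hc') as [-> | [-> | ->]]; lia).
  destruct (Nat.lt_ge_cases (6 * s) (c * s + c' * s')) as [Hlt|Hge]; [exact Hlt|exfalso].
  destruct col; cbn [opp] in HF'.
  - refine (F2 _ _ _ _ Hk Hk' _ x HF HF'). lia.
  - refine (F2 _ _ _ _ Hk' Hk _ x HF' HF). lia.
Qed.

Lemma potential_first f : (exists col c, occurs col f c x) ->
  (forall col s c, occurs col s c x -> (f <= s)%nat) -> potential x = / INR f.
Proof.
  intros [colf [cf [Hf [Hcf Hxf]]]] Hfirst. unfold potential.
  rewrite (sumR_ext _ (fun s => weight s * (if (f <=? s)%nat then 1 else 0))).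
  - rewrite sum_weight_from, Nat.max_r by lia. ring.
  - intros s Hs. apply in_seq in Hs. f_equal. unfold indl.
    destruct (memb (seen s) x) eqn:E; destruct (Nat.leb_spec f s); auto.
    + apply memb_spec, in_seen in E as [s' [col [c [Hs' [Hc Hx]]]]].
      assert (f <= s')%nat by (apply (Hfirst col s' c); repeat split; auto; lia). lia.
    + assert (In x (seen s)) as E' by (apply in_seen; exists f, colf, cf; repeat split; auto; lia).
      apply memb_spec in E'. congruence.
Qed.

Definition card_inv (col : color) (Y : R) : Prop :=
  Y = 0 \/ exists s c, occurs col s c x /\ Y = / INR (c * s)%nat.

Lemma share_absent col c : (forall s, ~ occurs col s c x) -> In c levels -> share col c x = 0.
Proof.
  intros Habs Hc. unfold share. rewrite (sumR_ext _ (fun _ => 0)); [rewrite sumR_const; ring|].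
  intros s Hs. apply in_seq in Hs. unfold indl. destruct (memb _ x) eqn:E; [|ring].
  exfalso. apply (Habs s). repeat split; auto; try lia. now apply memb_spec.
Qed.

Lemma share_le col c f a Y : In c levels -> (1 <= f)%nat ->
  (forall col s c, occurs col s c x -> (f <= s)%nat) -> (1 <= a)%nat ->
  (forall s, occurs col s c x -> (a <= c * s)%nat) -> card_inv (opp col) Y ->
  share col c x <= level_share c (/ INR f) (/ INR a) Y.
Proof.
  intros Hc Hf Hfirst Ha Hleast HY.
  destruct (classic (exists s, occurs col s c x)) as [Hex|Habs].
  2: { rewrite share_absent by (auto; intros s Hs; apply Habs; eauto). apply Rmax_l. }
  destruct (nat_least _ Hex) as [Lo [HLo HLo_min]].
  destruct (nat_greatest _ (m + K) Hex) as [Hi [HHi HHi_max]]; [intros s [Hs _]; lia|].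
  eapply Rle_trans.
  - apply (sum_weight_supported K m Lo Hi); [destruct HLo; lia|intros; apply indl_bounds|].
    intros s Hs Hnz. apply in_seq in Hs.
    assert (occurs col s c x).
    { repeat split; auto; try lia. unfold indl in Hnz. destruct (memb _ x) eqn:E; [now apply memb_spec|].
      contradiction. }
    auto.
  - apply level_share_ge; [split; [exact Hf|exact (Hfirst col Lo c HLo)]
                          |split; [exact Ha|exact (Hleast Lo HLo)]| |].
    + destruct HY as [->|[s1 [c1 [H1 ->]]]]; [lra|].
      destruct H1 as [Hs1 [Hc1 _]]. left. apply Rinv_INR_pos.
      destruct (levels_cases c1 Hc1) as [-> | [-> | ->]]; lia.
    + destruct HY as [->|[s1 [c1 [H1 ->]]]].
      * pose proof (Rinv_INR_pos (S Hi) ltac:(lia)). lra.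
      * pose proof (occurs_cross col Hi c s1 c1 HHi H1) as Hcross.
        destruct H1 as [Hs1 [Hc1 _]].
        apply cross_term_le; [auto| |]; destruct (levels_cases c1 Hc1) as [-> | [-> | ->]];
          destruct (levels_cases c Hc) as [-> | [-> | ->]]; lia.
Qed.

Lemma color_bound col f : (1 <= f)%nat -> (forall col s c, occurs col s c x -> (f <= s)%nat) ->
  exists X, 0 <= X <= / INR f / 3 /\ card_inv col X /\
  forall Y c, card_inv (opp col) Y -> In c levels -> share col c x <= level_share c (/ INR f) X Y.
Proof.
  intros Hf Hfirst. pose proof (Rinv_INR_pos f Hf).
  destruct (classic (exists k s c, occurs col s c x /\ k = (c * s)%nat)) as [Hex|Habs].
  - destruct (nat_least _ Hex) as [a [[s0 [c0 [H0 ->]]] Hleast]].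
    assert (Hf0 : (f <= s0)%nat) by exact (Hfirst col s0 c0 H0).
    assert (Ha : (3 * f <= c0 * s0)%nat).
    { destruct H0 as [_ [Hc0 _]]. destruct (levels_cases c0 Hc0) as [-> | [-> | ->]]; lia. }
    exists (/ INR (c0 * s0)). split; [split|split].
    + left. apply Rinv_INR_pos. lia.
    + replace (/ INR f / 3) with (/ INR (3 * f)) by (rewrite mult_INR; replace (INR 3) with 3 by (simpl; ring); field; apply not_0_INR; lia).
      apply Rinv_INR_le; lia.
    + right. eauto.
    + intros Y c HY Hc. apply share_le; auto; [lia|].
      intros s Hs. apply Hleast. eauto.
  - exists 0. split; [split; lra|]. split; [now left|].
    intros Y c _ Hc. rewrite share_absent by (auto; intros s Hs; apply Habs; eauto). apply Rmax_l.
Qed.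

Lemma charge_le_potential : (exists col s c, occurs col s c x) ->
  charge x <= (1 + 4 / 7 / INR m) * potential x.
Proof.
  intros Hx.
  destruct (nat_least (fun s => exists col c, occurs col s c x)) as [f [Hf Hfirst]].
  { destruct Hx as [col [s [c Hocc]]]. eauto. }
  assert (Hfm : (m <= f)%nat) by (destruct Hf as [col [c [Hr _]]]; lia).
  assert (Hfirst' : forall col s c, occurs col s c x -> (f <= s)%nat) by eauto.
  rewrite (potential_first f Hf Hfirst').
  destruct (color_bound cA f ltac:(lia) Hfirst') as [X [HX [HXinv HXshare]]].
  destruct (color_bound cB f ltac:(lia) Hfirst') as [Y [HY [HYinv HYshare]]].
  pose proof (charge_ineq (/ INR f) X Y HX HY).
  unfold charge, colors, levels, level_weight. cbn [sumR Nat.eqb].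
  assert (Hl3 : In 3%nat levels) by (simpl; auto).
  assert (Hl4 : In 4%nat levels) by (simpl; auto).
  assert (Hl6 : In 6%nat levels) by (simpl; auto).
  pose proof (HXshare Y 3%nat HYinv Hl3). pose proof (HXshare Y 4%nat HYinv Hl4).
  pose proof (HXshare Y 6%nat HYinv Hl6). pose proof (HYshare X 3%nat HXinv Hl3).
  pose proof (HYshare X 4%nat HXinv Hl4). pose proof (HYshare X 6%nat HXinv Hl6).
  assert (/ INR f * / INR f <= / INR f * / INR m).
  { apply Rmult_le_compat_l; [left; apply Rinv_INR_pos; lia|apply Rinv_INR_le; lia]. }
  replace ((1 + 4 / 7 / INR m) * / INR f) with (/ INR f + 4 / 7 * (/ INR f * / INR m))
    by (field; split; apply not_0_INR; lia).
  lra.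
Qed.

End Element.

Definition support : list nat :=
  nodup Nat.eq_dec (flat_map (fun col => flat_map (fun s => flat_map (block col s) levels) (seq m K)) colors).

Lemma in_support x : In x support <-> exists col s c, occurs col s c x.
Proof.
  unfold support. rewrite nodup_In, in_flat_map. split.
  - intros [col [_ Hx]]. apply in_flat_map in Hx as [s [Hs Hx]]. apply in_flat_map in Hx as [c [Hc Hx]].
    apply in_seq in Hs. exists col, s, c. repeat split; auto; lia.
  - intros [col [s [c [Hs [Hc Hx]]]]]. exists col. split; [destruct col; simpl; auto|].
    apply in_flat_map. exists s. split; [apply in_seq; lia|]. apply in_flat_map. eauto.
Qed.

Lemma sum_share col c : In c levels -> sumR (share col c) support = INR c * harm m K.
Proof.
  intros Hc. unfold share, harm. rewrite (sumR_swap (fun x s => weight s * indl x (block col s c))).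
  rewrite <- sumR_scal. apply sumR_ext. intros s Hs. apply in_seq in Hs.
  destruct (block_spec col s c ltac:(lia) Hc) as [Hnd [Hlen _]].
  rewrite sumR_scal, sumR_indl_incl; [| apply NoDup_nodup | exact Hnd | ].
  - rewrite Hlen, mult_INR, <- (weight_mul s) by lia. ring.
  - intros y Hy. apply in_support. exists col, s, c. repeat split; auto; lia.
Qed.

(* Each color contributes [2/7 * 3 + 3/7 * 4 + 2/7 * 6 = 30/7] per unit of [harm]. *)
Lemma sum_charge : sumR charge support = 60 / 7 * harm m K.
Proof.
  unfold charge. rewrite (sumR_swap (fun x col => sumR (fun c => level_weight c * share col c x) levels)).
  rewrite (sumR_ext _ (fun col => sumR (fun c => level_weight c * (INR c * harm m K)) levels)).
  - unfold colors, levels, level_weight. cbn [sumR Nat.eqb].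
    replace (INR 3) with 3 by (simpl; ring). replace (INR 4) with 4 by (simpl; ring).
    replace (INR 6) with 6 by (simpl; ring). lra.
  - intros col _. rewrite (sumR_swap (fun x c => level_weight c * share col c x)).
    apply sumR_ext. intros c Hc. rewrite sumR_scal, sum_share; auto.
Qed.

Variables Rc lam : R.
Hypothesis competitive_at : forall t, (0 < t)%nat -> card_leR (union_upto F t) (Rc * INR t + lam).

Lemma card_seen_le s : (1 <= s)%nat ->
  INR (length (filter (memb (seen s)) support)) <= Rc * (6 * INR s) + lam.
Proof.
  intros Hs. replace (6 * INR s) with (INR (6 * s)) by (rewrite mult_INR; simpl; ring).
  apply competitive_at; [lia|apply NoDup_filter, NoDup_nodup|].
  apply Forall_forall. intros x Hx. apply filter_In in Hx as [_ Hx].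
  apply memb_spec, in_seen in Hx as [s' [col [c [Hs' [Hc Hx]]]]].
  apply (block_in_union col s' c); auto; lia.
Qed.

Lemma card_support_le : INR (length support) <= Rc * (6 * INR (m + K)) + lam.
Proof.
  replace (6 * INR (m + K)) with (INR (6 * (m + K))) by (rewrite mult_INR; simpl; ring).
  apply competitive_at; [lia|apply NoDup_nodup|].
  apply Forall_forall. intros x Hx. apply in_support in Hx as [col [s [c [Hs [Hc Hx]]]]].
  apply (block_in_union col s c); auto; lia.
Qed.

Lemma sum_potential_le : sumR potential support <= 6 * Rc * harm m K + 2 * Rabs lam + 6 * Rabs Rc.
Proof.
  unfold potential. rewrite sumR_add, sumR_const.
  rewrite (sumR_swap (fun x s => weight s * indl x (seen s))).
  assert (Hseen : sumR (fun s => sumR (fun x => weight s * indl x (seen s)) support) (seq m K)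
                  <= 6 * Rc * harm m K + lam * sumR weight (seq m K)).
  { unfold harm. rewrite <- !sumR_scal, <- sumR_add. apply sumR_le. intros s Hs. apply in_seq in Hs.
    rewrite sumR_scal, sumR_indl, <- (weight_mul s) by lia.
    pose proof (card_seen_le s ltac:(lia)). pose proof (weight_nonneg s ltac:(lia)).
    replace (6 * Rc * (weight s * INR s) + lam * weight s) with (weight s * (Rc * (6 * INR s) + lam)) by ring.
    apply Rmult_le_compat_l; auto. }
  assert (Htail : / INR (m + K) * INR (length support) <= 6 * Rabs Rc + Rabs lam).
  { pose proof (Rinv_INR_pos (m + K) ltac:(lia)). pose proof (Rinv_INR_le (m + K) 1 ltac:(lia) ltac:(lia)).
    simpl INR in *. rewrite Rinv_1 in *.
    apply Rle_trans with (/ INR (m + K) * (Rc * (6 * INR (m + K)) + lam)).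
    - apply Rmult_le_compat_l; [lra|apply card_support_le].
    - replace (/ INR (m + K) * (Rc * (6 * INR (m + K)) + lam)) with (6 * Rc + lam * / INR (m + K))
        by (field; apply not_0_INR; lia).
      pose proof (Rle_abs Rc). pose proof (Rmult_le_Rabs lam (/ INR (m + K)) ltac:(lra)). lra. }
  pose proof (Rmult_le_Rabs lam _ (sum_weight_bounds m K m_pos)). lra.
Qed.

Lemma charging_bound :
  60 / 7 * harm m K <= (1 + 4 / 7 / INR m) * (6 * Rc * harm m K + 2 * Rabs lam + 6 * Rabs Rc).
Proof.
  rewrite <- sum_charge. apply Rle_trans with ((1 + 4 / 7 / INR m) * sumR potential support).
  - rewrite <- sumR_scal. apply sumR_le. intros x Hx. apply charge_le_potential. now apply in_support.
  - apply Rmult_le_compat_l; [|apply sum_potential_le].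
    assert (0 < INR m) by (apply lt_0_INR; lia). assert (0 < 4 / 7 / INR m) by (apply Rdiv_lt_0_compat; lra). lra.
Qed.

End Charging.

Lemma witness_lists (F : Ffamily) : (forall c t k, (0 < k <= t)%nat -> card_ge (F c t k) k) ->
  exists L : color -> nat -> nat -> list nat, forall c t k, (0 < k <= t)%nat ->
    NoDup (L c t k) /\ length (L c t k) = k /\ Forall (F c t k) (L c t k).
Proof.
  intros HF1.
  exists (fun c t k => match excluded_middle_informative (0 < k <= t)%nat with
                      | left h => proj1_sig (constructive_indefinite_description _ (HF1 c t k h))
                      | right _ => nil end).
  intros c t k Hk. destruct excluded_middle_informative as [h|]; [|contradiction].
  exact (proj2_sig (constructive_indefinite_description _ (HF1 c t k h))).
Qed.

Lemma le_of_unbounded (a b B : R) : (forall J : nat, exists h, INR J <= h /\ a * h <= b * h + B) -> a <= b.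
Proof.
  intros H. apply Rnot_lt_le. intros Hba.
  destruct (INR_unbounded (Rabs B / (a - b))) as [J HJ]. destruct (H J) as [h [Hh Hab]].
  assert (Rabs B < (a - b) * h).
  { apply (Rmult_lt_compat_l (a - b)) in HJ; [|lra].
    replace ((a - b) * (Rabs B / (a - b))) with (Rabs B) in HJ by (field; lra). nra. }
  pose proof (Rle_abs B). nra.
Qed.

Lemma le_of_shrinking_factor (a b c : R) : 0 <= c ->
  (forall n : nat, (1 <= n)%nat -> a <= (1 + c / INR n) * b) -> a <= b.
Proof.
  intros Hc H. destruct (Rle_lt_dec b 0) as [Hb|Hb].
  - specialize (H 1%nat (le_n 1)). simpl INR in H. nra.
  - apply Rnot_lt_le. intros Hba.
    destruct (INR_unbounded (c * b / (a - b))) as [n0 Hn0]. set (n := S n0).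
    assert (Hn : INR n > c * b / (a - b)) by (unfold n; rewrite S_INR; lra).
    specialize (H n ltac:(unfold n; lia)). assert (0 < INR n) by (apply lt_0_INR; unfold n; lia).
    assert (c * b < (a - b) * INR n).
    { apply (Rmult_lt_compat_l (a - b)) in Hn; [|lra].
      replace ((a - b) * (c * b / (a - b))) with (c * b) in Hn by (field; lra). lra. }
    replace ((1 + c / INR n) * b) with (b + c * b / INR n) in H by (field; lra).
    assert (c * b / INR n < a - b).
    { apply (Rmult_lt_reg_r (INR n)); [lra|]. replace (c * b / INR n * INR n) with (c * b) by (field; lra). lra. }
    lra.
Qed.

Theorem mainTheorem10 (Rc : R) (hR : Rc < 10 / 7) :
  ~ exists F : Ffamily, F_system F /\ competitive Rc F.
Proof.
  intros [F [[_ [HF1 HF2]] [lam Hcomp]]].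
  destruct (witness_lists F HF1) as [L HL].
  enough (10 / 7 <= Rc) by lra.
  apply (Rmult_le_reg_l 6); [lra|].
  apply (le_of_shrinking_factor _ _ (4 / 7)); [lra|]. intros m Hm.
  apply (le_of_unbounded _ _ ((1 + 4 / 7 / INR m) * (2 * Rabs lam + 6 * Rabs Rc))). intros J.
  destruct (harm_unbounded m J Hm) as [K HK]. exists (harm m K). split; [exact HK|].
  pose proof (charging_bound F L HL HF2 m K Hm Rc lam Hcomp). lra.
Qed.
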